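(* Let $\lambda$ be an uncountable cardinal and $S\subseteq\lambda^+$ stationary. Then $\diamondsuit\square'_\lambda(S)\Rightarrow\diamondsuit\square_\lambda(S)\Rightarrow\clubsuit\square_\lambda(S)$.
   Context: $\operatorname{acc}(A)=\{\alpha\in A:\sup(A\cap\alpha)=\alpha\}$, $\operatorname{nacc}(A)=A\setminus\operatorname{acc}(A)$ for a set of ordinals $A$. A $\square_\lambda$-sequence is $\langle C_\alpha:\alpha<\lambda^+\rangle$ such that for every limit $\alpha<\lambda^+$, $C_\alpha$ is a club in $\alpha$ of order type $\le\lambda$, and $\beta\in\operatorname{acc}(C_\alpha)$ implies $C_\beta=C_\alpha\cap\beta$. $\diamondsuit\square'_\lambda(S)$: there is a sequence $\langle (C_\alpha,S_\alpha):\alpha<\lambda^+\rangle$ with $S_\alpha\subseteq\alpha$ such that $C_\alpha$ is a club in $\alpha$ of order type $\le\lambda$ for limit $\alpha$; if $\beta\in\operatorname{acc}(C_\alpha)$ then $C_\beta=C_\alpha\cap\beta$ and $S_\beta=S_\alpha\cap\beta$; and for every club $D\subseteq\lambda^+$ and every $A\subseteq\lambda^+$ there is $\alpha\in S$ with $C_\alpha\subseteq D$, $S_\alpha=A\cap\alpha$, $\sup(\operatorname{acc}(C_\alpha))=\alpha$. $\diamondsuit\square_\lambda(S)$: there are a $\square_\lambda$-sequence $\langle C_\alpha\rangle$, a sequence $\langle S_\alpha\rangle$ with $S_\alpha\subseteq\alpha$ and $S_\beta=S_\alpha\cap\beta$ whenever $\beta\in\operatorname{acc}(C_\alpha)$,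 and a set $S'\subseteq S$ with $S'\cap\operatorname{acc}(C_\alpha)=\emptyset$ for all $\alpha$, such that for every club $D\subseteq\lambda^+$ and every $A\subseteq\lambda^+$ there is $\alpha\in S'$ with $C_\alpha\subseteq D$, $S_\alpha=A\cap\alpha$ and $\sup(\operatorname{acc}(C_\alpha))=\alpha$. $\clubsuit\square_\lambda(S)$: there are a $\square_\lambda$-sequence $\langle C_\alpha\rangle$ and $S'\subseteq S$ with $S'\cap\operatorname{acc}(C_\alpha)=\emptyset$ for all $\alpha<\lambda^+$, such that for every club $D\subseteq\lambda^+$ and every cofinal $A\subseteq\lambda^+$ there is $\alpha\in S'$ with $\operatorname{acc}(C_\alpha)\subseteq D$ and $\operatorname{nacc}(C_\alpha)\subseteq A$. *)

(* Ordinals below lambda^+ are modelled by an abstract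
   well-ordered type (K, lt) whose order type is forced to be lambda^+. *)
From Stdlib Require Import Wellfounded.

Section SetTheory.
Variables (K : Type) (lt : K -> K -> Prop).

Definition le (x y : K) : Prop := lt x y \/ x = y.

Definition strict_well_order : Prop :=
  well_founded lt /\
  (forall x, ~ lt x x) /\
  (forall x y z, lt x y -> lt y z -> lt x z) /\
  (forall x y, lt x y \/ x = y \/ lt y x).

Definition seg_inj (a b : K) : Prop :=
  exists f : K -> K,
    (forall x y, lt x a -> lt y a -> f x = f y -> x = y) /\
    (forall x, lt x a -> lt (f x) b).

(* (K, lt) is (order-isomorphic to) lam^+ where lam is an uncountable cardinal *)
Definition is_succ_of_uncountable_cardinal (lam : K) : Prop :=
  strict_well_order /\
  (forall b, lt b lam -> ~ seg_inj lam b) /\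
  (~ exists g : K -> nat, forall x y, lt x lam -> lt y lam -> g x = g y -> x = y) /\
  (forall a, seg_inj a lam) /\
  (~ exists f : K -> K,
       (forall x y, f x = f y -> x = y) /\ (forall x, lt (f x) lam)).

Definition is_limit (a : K) : Prop :=
  (exists b, lt b a) /\ (forall b, lt b a -> exists c, lt b c /\ lt c a).

(* acc(A) = { a in A : sup(A cap a) = a }  (literally, as in the paper) *)
Definition acc (A : K -> Prop) (a : K) : Prop :=
  A a /\ (forall b, lt b a -> exists c, A c /\ lt b c /\ lt c a).

Definition nacc (A : K -> Prop) (a : K) : Prop := A a /\ ~ acc A a.

Definition sup_eq (X : K -> Prop) (a : K) : Prop :=
  (forall x, X x -> lt x a) /\ (forall b, lt b a -> exists c, X c /\ lt b c).

Definition club_in (C : K -> Prop) (a : K) : Prop :=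
  (forall x, C x -> lt x a) /\
  (forall b, lt b a -> exists c, C c /\ le b c) /\
  (forall b, lt b a -> (exists c, C c /\ lt c b) ->
      (forall d, lt d b -> exists c, C c /\ lt d c /\ lt c b) -> C b).

Definition club (D : K -> Prop) : Prop :=
  (forall b, exists c, D c /\ le b c) /\
  (forall b, (exists c, D c /\ lt c b) ->
      (forall d, lt d b -> exists c, D c /\ lt d c /\ lt c b) -> D b).

Definition stationary (S : K -> Prop) : Prop :=
  forall D, club D -> exists a, S a /\ D a.

Definition cofinal (A : K -> Prop) : Prop := forall b, exists c, A c /\ le b c.

Definition otp_le (C : K -> Prop) (lam : K) : Prop :=
  exists f : K -> K,
    (forall x y, C x -> C y -> lt x y -> lt (f x) (f y)) /\
    (forall x, C x -> lt (f x) lam).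

Definition subset (A B : K -> Prop) : Prop := forall x, A x -> B x.

Definition eq_cap (X Y : K -> Prop) (b : K) : Prop :=
  forall x, X x <-> (Y x /\ lt x b).

Definition square_seq (lam : K) (C : K -> K -> Prop) : Prop :=
  (forall a, is_limit a -> club_in (C a) a /\ otp_le (C a) lam) /\
  (forall a b, acc (C a) b -> eq_cap (C b) (C a) b).

Definition diamond_square' (lam : K) (S : K -> Prop) : Prop :=
  exists (C Sq : K -> K -> Prop),
    (forall a, subset (Sq a) (fun x => lt x a)) /\
    (forall a, is_limit a -> club_in (C a) a /\ otp_le (C a) lam) /\
    (forall a b, acc (C a) b -> eq_cap (C b) (C a) b /\ eq_cap (Sq b) (Sq a) b) /\
    (forall D A, club D ->
       exists a, S a /\ subset (C a) D /\ eq_cap (Sq a) A a /\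
                 sup_eq (acc (C a)) a).

Definition diamond_square (lam : K) (S : K -> Prop) : Prop :=
  exists (C Sq : K -> K -> Prop) (S' : K -> Prop),
    square_seq lam C /\
    (forall a, subset (Sq a) (fun x => lt x a)) /\
    (forall a b, acc (C a) b -> eq_cap (Sq b) (Sq a) b) /\
    subset S' S /\
    (forall a x, S' x -> ~ acc (C a) x) /\
    (forall D A, club D ->
       exists a, S' a /\ subset (C a) D /\ eq_cap (Sq a) A a /\
                 sup_eq (acc (C a)) a).

Definition club_square (lam : K) (S : K -> Prop) : Prop :=
  exists (C : K -> K -> Prop) (S' : K -> Prop),
    square_seq lam C /\
    subset S' S /\
    (forall a x, S' x -> ~ acc (C a) x) /\
    (forall D A, club D -> cofinal A ->
       exists a, S' a /\ subset (acc (C a)) D /\ subset (nacc (C a)) A).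

End SetTheory.

From Stdlib Require Import Classical ClassicalEpsilon Lia.

(** Lemma 2.4: diamond-square'(S) implies diamond-square(S), which implies
    club-square(S).

    Call [a] a candidate if [a \in S] and [acc (C a)] is
    cofinal in [a], and a minimal candidate if no accumulation point of [C a]
    is a candidate.  By coherence each ladder carries at most one minimal
    candidate; cutting every ladder above it keeps the square properties, the
    minimal candidates form the required [S'], and a guess at [a] descends to
    the least candidate in [{a} \cup acc (C a)].

    Replace [C a] by the accumulation points of [C a]
    plus, above each non-accumulation point, the next point of [Sq a \cup C a].
    A guessing point whose ladder lies inside the limits of [A] (within [D])
    then has all its successor points in [A].  That these limits form a club
    uses that guessed ladders force every club to have a limit point, so [K]
    has no maximum and no cofinal [omega]-orbit. *)

Section WellOrder.
Variables (K : Type) (lt : K -> K -> Prop).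
Hypothesis lt_wf : well_founded lt.
Hypothesis lt_irrefl : forall x, ~ lt x x.
Hypothesis lt_trans : forall x y z, lt x y -> lt y z -> lt x z.
Hypothesis lt_total : forall x y, lt x y \/ x = y \/ lt y x.

Local Notation leK := (le K lt).
Local Notation accK := (acc K lt).
Local Notation naccK := (nacc K lt).

Lemma le_lt_trans x y z : leK x y -> lt y z -> lt x z.
Proof. intros [H|<-] H2; eauto. Qed.

Lemma lt_le_trans x y z : lt x y -> leK y z -> lt x z.
Proof. intros H [H2|<-]; eauto. Qed.

Lemma not_lt_le x y : ~ lt x y -> leK y x.
Proof. intros H. destruct (lt_total x y) as [h|[h|h]]; [contradiction|right|left]; auto. Qed.

Lemma le_not_lt x y : leK x y -> ~ lt y x.
Proof. intros H H2. apply (lt_irrefl x). eapply le_lt_trans; eauto. Qed.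

Lemma least_elt (Q : K -> Prop) :
  (exists x, Q x) -> exists x, Q x /\ forall y, Q y -> leK x y.
Proof.
  intros [x Hx]. revert Hx. induction x as [x IH] using (well_founded_induction lt_wf).
  intros Hx. destruct (classic (exists y, Q y /\ lt y x)) as [[y [Hy Hyx]]|Hn].
  - exact (IH y Hyx Hy).
  - exists x. split; auto. intros y Hy. apply not_lt_le. intros Hyx. eauto.
Qed.

Lemma acc_mono (X Y : K -> Prop) : subset K X Y -> subset K (accK X) (accK Y).
Proof.
  intros H x [H1 H2]. split; auto. intros d Hd. destruct (H2 d Hd) as [c [? ?]]. eauto.
Qed.

Lemma acc_ext (X Y : K -> Prop) : (forall x, X x <-> Y x) -> forall x, accK X x <-> accK Y x.
Proof. intros H x; split; apply acc_mono; intros y; apply H. Qed.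

Lemma acc_cap (X Y : K -> Prop) b : eq_cap K lt X Y b ->
  forall x, accK X x <-> accK Y x /\ lt x b.
Proof.
  intros E x; split.
  - intros [H1 H2]. apply E in H1 as [H1 xb]. split; [split|]; auto.
    intros d Hd. destruct (H2 d Hd) as [c [Hc [? ?]]]. apply E in Hc as [? ?]. eauto.
  - intros [[H1 H2] xb]. split; [apply E; auto|]. intros d Hd.
    destruct (H2 d Hd) as [c [Hc [? ?]]]. exists c. split; [apply E; split; eauto|auto].
Qed.

(* [x] is a limit of points of [A]; [acc A x] unfolds to [A x /\ limit_of A x]. *)
Definition limit_of (A : K -> Prop) (x : K) : Prop :=
  forall b, lt b x -> exists a, A a /\ lt b a /\ lt a x.

Definition cut_above (X Q : K -> Prop) (x : K) : Prop := X x /\ forall q, Q q -> lt q x.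

Lemma club_in_cut_above (X Q : K -> Prop) a m :
  club_in K lt X a -> is_limit K lt a -> lt m a -> (forall q, Q q -> leK q m) ->
  club_in K lt (cut_above X Q) a.
Proof.
  intros [Xbd [Xcof Xcl]] [_ Hlim] ma Qm. split; [|split].
  - intros x [Xx _]. auto.
  - intros b ba.
    assert (exists n, leK b n /\ leK m n /\ lt n a) as [n [bn [mn na]]].
    { destruct (lt_total b m) as [h|[<-|h]].
      - exists m. repeat split; [left|right|]; auto.
      - exists b. repeat split; [right|right|]; auto.
      - exists b. repeat split; [right|left|]; auto. }
    destruct (Hlim n na) as [d [nd da]]. destruct (Xcof d da) as [c [Xc dc]].
    exists c. split; [split; auto|].
    + intros q Qq. eapply le_lt_trans; [exact (Qm q Qq)|].
      eapply le_lt_trans; [exact mn|]. eapply lt_le_trans; eauto.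
    + left. eapply le_lt_trans; [exact bn|]. eapply lt_le_trans; eauto.
  - intros b ba [c [[Xc Qc] cb]] Hcof. split.
    + apply Xcl; eauto. intros d Hd. destruct (Hcof d Hd) as [c' [[? _] ?]]. eauto.
    + intros q Qq. eauto.
Qed.

Lemma otp_le_sub (X Y : K -> Prop) lam : subset K X Y -> otp_le K lt Y lam -> otp_le K lt X lam.
Proof. intros H [f [fm fl]]. exists f. split; auto. Qed.

(* If every two points of [X] are separated by a point of [Y], and [Y] is cofinal
   above every point of [X], then [x |-> min (Y \cap [x, ->))] embeds [X] into [Y]. *)
Lemma otp_le_transfer (X Y : K -> Prop) lam :
  (forall x, X x -> exists c, Y c /\ leK x c) ->
  (forall x1 x2, X x1 -> X x2 -> lt x1 x2 -> exists c, Y c /\ leK x1 c /\ lt c x2) ->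
  otp_le K lt Y lam -> otp_le K lt X lam.
Proof.
  intros Hcof Hsep [f [fm fl]].
  set (H := fun x => epsilon (inhabits x)
              (fun c => Y c /\ leK x c /\ forall c', Y c' -> leK x c' -> leK c c')).
  assert (HH : forall x, X x -> Y (H x) /\ leK x (H x) /\
                             forall c', Y c' -> leK x c' -> leK (H x) c').
  { intros x Xx. apply epsilon_spec.
    destruct (least_elt (fun c => Y c /\ leK x c)) as [c [[Yc xc] Hm]]; auto.
    exists c. split; [auto|split; [auto|]]. intros c' Yc' xc'. apply Hm; auto. }
  exists (fun x => f (H x)). split.
  - intros x1 x2 X1 X2 x12. apply fm; [apply HH; auto|apply HH; auto|].
    destruct (Hsep x1 x2 X1 X2 x12) as [c [Yc [x1c cx2]]].
    destruct (HH x2 X2) as [_ [x2H _]].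
    apply (le_lt_trans _ c); [apply (proj2 (proj2 (HH x1 X1))); auto|]. eapply lt_le_trans; eauto.
  - intros x Xx. apply fl, HH, Xx.
Qed.

Definition next_above (X : K -> Prop) (g x : K) : Prop :=
  X x /\ lt g x /\ forall y, X y -> lt g y -> leK x y.

Lemma next_above_exists (X : K -> Prop) g :
  (exists y, X y /\ lt g y) -> exists y, next_above X g y.
Proof.
  intros H. destruct (least_elt _ H) as [y [[Xy gy] Hm]].
  exists y. split; [auto|split; [auto|]]. intros z Xz gz. apply Hm; auto.
Qed.

Lemma next_above_cap (X Y : K -> Prop) b g x : eq_cap K lt X Y b ->
  next_above X g x <-> next_above Y g x /\ lt x b.
Proof.
  intros E; split.
  - intros [Xx [gx Hm]]. apply E in Xx as [Yx xb]. repeat split; auto.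
    intros y Yy gy. destruct (classic (lt y b)) as [yb|nyb].
    + apply Hm; auto. apply E; auto.
    + left. eapply lt_le_trans; eauto. apply not_lt_le; auto.
  - intros [[Yx [gx Hm]] xb]. split; [apply E; auto|]. split; auto.
    intros y Xy gy. apply E in Xy as [Yy _]. auto.
Qed.

(** * From [diamond_square'] to [diamond_square]

    The points of [S] where the sequence guesses, i.e. where [acc (C a)] is
    cofinal, may lie on each other's ladders.  Keep only the [acc]-minimal ones
    (they form [S']) and shorten every ladder so that it starts above the unique
    minimal point lying on it; minimal points then never are accumulation points
    of the new ladders, and a guess at [a] descends to a minimal [b] with
    [b = a] or [b] in [acc (C a)], whose ladder is unchanged. *)

Section DiamondPrime.
Variables (S : K -> Prop) (C Sq : K -> K -> Prop).
Hypothesis C_coh : forall a b, accK (C a) b -> eq_cap K lt (C b) (C a) b.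
Hypothesis Sq_coh : forall a b, accK (C a) b -> eq_cap K lt (Sq b) (Sq a) b.

Definition candidate (a : K) : Prop := S a /\ sup_eq K lt (accK (C a)) a.

Definition minimal_candidate (a : K) : Prop :=
  candidate a /\ forall b, accK (C a) b -> ~ candidate b.

Definition minimal_on (g q : K) : Prop := accK (C g) q /\ minimal_candidate q.

Definition trimmed (g : K) : K -> Prop := cut_above (C g) (minimal_on g).

(* By coherence, of two accumulation points of one ladder the smaller is an
   accumulation point of the ladder of the larger; so a ladder carries at most
   one minimal candidate. *)
Lemma minimal_on_unique g a1 a2 : minimal_on g a1 -> minimal_on g a2 -> a1 = a2.
Proof.
  intros [H1 [P1 M1]] [H2 [P2 M2]].
  destruct (lt_total a1 a2) as [h|[h|h]]; auto; exfalso.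
  - apply (M2 a1); [apply (acc_cap _ _ _ (C_coh g a2 H2)); auto|exact P1].
  - apply (M1 a2); [apply (acc_cap _ _ _ (C_coh g a1 H1)); auto|exact P2].
Qed.

Lemma acc_trimmed g : subset K (accK (trimmed g)) (accK (C g)).
Proof. apply acc_mono. intros x [Cx _]. exact Cx. Qed.

Lemma minimal_not_acc_trimmed g x : minimal_candidate x -> ~ accK (trimmed g) x.
Proof.
  intros Mx Hx. apply (lt_irrefl x), (proj2 (proj1 Hx)).
  split; [apply acc_trimmed|]; auto.
Qed.

Lemma trimmed_minimal b : minimal_candidate b -> forall x, trimmed b x <-> C b x.
Proof.
  intros [_ Mb] x. split; [intros [Cx _]; exact Cx|].
  intros Cx. split; auto. intros q [Hq [Pq _]]. exfalso. exact (Mb q Hq Pq).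
Qed.

Lemma trimmed_club a lam : is_limit K lt a ->
  club_in K lt (C a) a /\ otp_le K lt (C a) lam ->
  club_in K lt (trimmed a) a /\ otp_le K lt (trimmed a) lam.
Proof.
  intros Hlim [Hcl Hotp]. split; [|apply (otp_le_sub _ (C a)); auto; intros x [Cx _]; auto].
  destruct (classic (exists q, minimal_on a q)) as [[q Hq]|Hno].
  - apply (club_in_cut_above _ _ a q); auto.
    + apply (proj1 Hcl), (proj1 (proj1 Hq)).
    + intros q' Hq'. right. apply (minimal_on_unique a); auto.
  - destruct (proj1 Hlim) as [m ma].
    apply (club_in_cut_above _ _ a m); auto. intros q' Hq'. exfalso. eauto.
Qed.

(* Trimmed ladders cohere: the minimal candidate on [C b] is the one on [C a]. *)
Lemma trimmed_coh a b : accK (trimmed a) b -> eq_cap K lt (trimmed b) (trimmed a) b.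
Proof.
  intros Ha. pose proof (acc_trimmed a b Ha) as Hab. pose proof (C_coh a b Hab) as E.
  assert (EM : forall q, minimal_on b q <-> minimal_on a q /\ lt q b).
  { intros q. unfold minimal_on. rewrite (acc_cap _ _ _ E q). tauto. }
  assert (below : forall q, minimal_on a q -> lt q b).
  { intros q Hq. apply (proj2 (proj1 Ha)), Hq. }
  intros x. unfold trimmed, cut_above. rewrite (E x). split.
  - intros [[Cx xb] Hcut]. repeat split; auto.
    intros q Hq. apply Hcut, EM. auto.
  - intros [[Cx Hcut] xb]. repeat split; auto.
    intros q Hq. apply Hcut, EM, Hq.
Qed.

Lemma minimal_candidate_below a : candidate a ->
  exists b, (b = a \/ accK (C a) b) /\ minimal_candidate b.
Proof.
  intros Pa.
  destruct (least_elt (fun b => (b = a \/ accK (C a) b) /\ candidate b))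
    as [b [[Hb Pb] Hm]]; [eauto|].
  exists b. split; auto. split; auto. intros g Hg Pg.
  assert (gb : lt g b) by (apply (proj1 (proj2 Pb)); auto).
  assert (Hga : accK (C a) g).
  { destruct Hb as [->|Hb]; auto. apply (acc_cap _ _ _ (C_coh a b Hb)) in Hg. apply Hg. }
  exact (le_not_lt _ _ (Hm g (conj (or_intror Hga) Pg)) gb).
Qed.

Lemma guess_descends a b D A : accK (C a) b -> lt b a ->
  subset K (C a) D -> eq_cap K lt (Sq a) A a ->
  subset K (C b) D /\ eq_cap K lt (Sq b) A b.
Proof.
  intros Hab ba HD HA. split.
  - intros x Cx. apply HD, (C_coh a b Hab), Cx.
  - intros x. rewrite (Sq_coh a b Hab x), (HA x).
    split; [intros [[? ?] ?]; auto|intros [? ?]; repeat split; eauto].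
Qed.

End DiamondPrime.

Lemma diamond'_to_diamond lam S : diamond_square' K lt lam S -> diamond_square K lt lam S.
Proof.
  intros [C [Sq [HSq [Hcl [Hcoh Hguess]]]]].
  pose proof (fun a b H => proj1 (Hcoh a b H)) as C_coh.
  pose proof (fun a b H => proj2 (Hcoh a b H)) as Sq_coh.
  exists (trimmed S C), Sq, (minimal_candidate S C).
  split; [split|split; [exact HSq|split; [|split; [|split]]]].
  - intros a Hlim. apply trimmed_club; auto.
  - apply trimmed_coh; auto.
  - intros a b H. apply Sq_coh, (acc_trimmed S C), H.
  - intros x [[Sx _] _]. exact Sx.
  - intros a x Mx. apply minimal_not_acc_trimmed; auto.
  - intros D A HD. destruct (Hguess D A HD) as [a [Sa [CD [SqA Sup]]]].
    destruct (minimal_candidate_below S C C_coh a) as [b [Hb Mb]]; [split; auto|].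
    assert (subset K (C b) D /\ eq_cap K lt (Sq b) A b) as [CbD SqbA].
    { destruct Hb as [->|Hb]; auto.
      apply (guess_descends C Sq C_coh Sq_coh a); auto. apply (proj1 Sup), Hb. }
    exists b. split; [exact Mb|split; [|split; auto]].
    + intros x Hx. apply CbD, (trimmed_minimal S C b Mb), Hx.
    + destruct (proj2 (proj1 Mb)) as [Sp1 Sp2]. split.
      * intros x Hx. apply Sp1, (acc_ext _ _ (trimmed_minimal S C b Mb)), Hx.
      * intros y Hy. destruct (Sp2 y Hy) as [c [Hc yc]]. exists c.
        split; auto. apply (acc_ext _ _ (trimmed_minimal S C b Mb)), Hc.
Qed.

(** * Consequences of guessing clubs

    If every club [D] contains the ladder [C a] of some non-minimal [a] whose
    accumulation points are cofinal in [a], then every club has a limit point;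
    hence [K] has no maximum and no cofinal [omega]-sequence, and the limit
    points of a cofinal set form, inside any club, again a club. *)

Section ClubGuessing.
Variable C : K -> K -> Prop.
Hypothesis guess_clubs : forall D, club K lt D ->
  exists a, subset K (C a) D /\ sup_eq K lt (accK (C a)) a /\ exists b, lt b a.

Lemma club_has_limit_point D : club K lt D -> exists c, D c /\ limit_of D c /\ exists b, lt b c.
Proof.
  intros HD. destruct (guess_clubs D HD) as [a [CD [[Sup1 Sup2] [b ba]]]].
  destruct (Sup2 b ba) as [c [Hc bc]].
  destruct (acc_mono _ _ CD c Hc) as [Dc Lc]. eauto.
Qed.

Lemma no_maximum x : exists y, lt x y.
Proof.
  apply NNPP. intros Hx.
  assert (xmax : forall y, ~ lt x y) by (intros y h; apply Hx; eauto).
  destruct (club_has_limit_point (fun y => y = x)) as [c [-> [Lc [b bx]]]].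
  - split.
    + intros b. exists x. split; auto. apply not_lt_le, xmax.
    + intros b [c [-> xb]]. exfalso. exact (xmax b xb).
  - destruct (Lc b bx) as [c [-> [_ xx]]]. exact (lt_irrefl x xx).
Qed.

Lemma iter_le (f : K -> K) b : (forall x, lt x (f x)) ->
  forall i j, i <= j -> leK (Nat.iter i f b) (Nat.iter j f b).
Proof.
  intros Hf i j Hij. induction Hij as [|j _ IH]; [right; reflexivity|].
  left. eapply le_lt_trans; [exact IH|apply Hf].
Qed.

Lemma orbit_below (f : K -> K) b d : (forall x, lt x (f x)) ->
  (exists j, lt (Nat.iter j f b) d) ->
  limit_of (fun y => exists k, y = Nat.iter k f b) d ->
  forall n, lt (Nat.iter n f b) d.
Proof.
  intros Hf [j jd] Hlim n. induction n as [|n IH].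
  - apply (le_lt_trans _ (Nat.iter j f b)); [apply iter_le; auto; lia|exact jd].
  - destruct (Hlim _ IH) as [y [[k ->] [nk kd]]].
    destruct (PeanoNat.Nat.le_gt_cases k n) as [kn|nk'].
    + exfalso. exact (le_not_lt _ _ (iter_le f b Hf k n kn) nk).
    + apply (le_lt_trans _ (Nat.iter k f b)); [apply iter_le; auto|exact kd].
Qed.

(* [K] has uncountable cofinality: every inflationary orbit is bounded,
   for otherwise it would be a club without limit points. *)
Lemma orbit_bounded (f : K -> K) b : (forall x, lt x (f x)) ->
  exists u, forall k, lt (Nat.iter k f b) u.
Proof.
  intros Hf. apply NNPP. intros Hnub.
  assert (unb : forall u, exists k, leK u (Nat.iter k f b)).
  { intros u. apply NNPP. intros Hn. apply Hnub. exists u. intros k.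
    apply NNPP. intros h. apply Hn. exists k. apply not_lt_le. exact h. }
  set (B := fun y => exists k, y = Nat.iter k f b).
  destruct (club_has_limit_point B) as [c [[n ->] [Lc [b0 b0c]]]].
  - split.
    + intros u. destruct (unb u) as [k Hk]. exists (Nat.iter k f b). split; auto. exists k; auto.
    + intros d [c [[j ->] jd]] Ld. exfalso. destruct (unb d) as [k Hk].
      apply (le_not_lt _ _ Hk), orbit_below; eauto.
  - apply (lt_irrefl (Nat.iter n f b)), orbit_below; auto.
    destruct (Lc b0 b0c) as [y [[j ->] [_ jn]]]. exists j. exact jn.
Qed.

Lemma cofinal_successor (A : K -> Prop) : cofinal K lt A ->
  exists g : K -> K, forall x, A (g x) /\ lt x (g x).
Proof.
  intros HA.
  assert (HA' : forall x, exists c, A c /\ lt x c).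
  { intros x. destruct (no_maximum x) as [y xy]. destruct (HA y) as [c [Ac yc]].
    exists c. split; auto. eapply lt_le_trans; eauto. }
  exists (fun x => epsilon (inhabits x) (fun c => A c /\ lt x c)).
  intros x. apply epsilon_spec, HA'.
Qed.

Lemma orbit_sup (f : K -> K) b : (forall x, lt x (f x)) ->
  exists s, (forall k, lt (Nat.iter k f b) s) /\
            forall d, lt d s -> exists k, leK d (Nat.iter k f b).
Proof.
  intros Hf. destruct (least_elt _ (orbit_bounded f b Hf)) as [s [Hs Hm]].
  exists s. split; auto. intros d ds. apply NNPP. intros Hn.
  assert (Hd : forall k, lt (Nat.iter k f b) d).
  { intros k. apply NNPP. intros h. apply Hn. exists k. apply not_lt_le. exact h. }
  exact (le_not_lt _ _ (Hm d Hd) ds).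
Qed.

(* Inside a club, the limits of a cofinal set form a club: alternate between
   [A] and [D] [omega] times and take the supremum. *)
Lemma club_limits_of_cofinal D A : club K lt D -> cofinal K lt A ->
  club K lt (fun x => D x /\ limit_of A x).
Proof.
  intros HD HA.
  destruct (cofinal_successor A HA) as [gA HgA].
  destruct (cofinal_successor D (proj1 HD)) as [gD HgD].
  set (f := fun x => gD (gA x)).
  assert (Hf : forall x, lt x (f x)) by (intros x; apply (lt_trans _ (gA x)); apply HgA || apply HgD).
  split.
  - intros b. destruct (orbit_sup f b Hf) as [s [Hs Hsup]].
    exists s. split; [split|left; exact (Hs 0)].
    + apply (proj2 HD).
      * exists (Nat.iter 1 f b). split; auto. apply HgD.
      * intros d ds. destruct (Hsup d ds) as [k Hk]. exists (Nat.iter (S k) f b).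
        split; [apply HgD|split; auto]. eapply le_lt_trans; [exact Hk|apply Hf].
    + intros d ds. destruct (Hsup d ds) as [k Hk]. exists (gA (Nat.iter k f b)).
      split; [apply HgA|split].
      * eapply le_lt_trans; [exact Hk|apply HgA].
      * apply (lt_trans _ (Nat.iter (S k) f b)); [apply HgD|apply Hs].
  - intros s [c [[Dc _] cs]] Hlim. split.
    + apply (proj2 HD); [eauto|]. intros d ds. destruct (Hlim d ds) as [c' [[? ?] ?]]. eauto.
    + intros b bs. destruct (Hlim b bs) as [c' [[_ Lc'] [bc' c's]]].
      destruct (Lc' b bc') as [a [Aa [ba ac']]]. eauto.
Qed.

End ClubGuessing.

(** * From [diamond_square] to [club_square]

    Replace the ladder [C a] by [ladder a]: its accumulation points, together
    with, for each non-accumulation point [g] of [C a], the first point above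
    [g] of [Sq a] or [C a].  This keeps the accumulation points (so coherence
    and the order type bound survive), while a guess of [A \cap a] by [Sq a]
    on a ladder inside the limits of [A] forces every new successor point to
    lie in [A]. *)

Section Ladders.
Variables (C Sq : K -> K -> Prop).
Hypothesis Sq_below : forall a, subset K (Sq a) (fun x => lt x a).
Hypothesis C_coh : forall a b, accK (C a) b -> eq_cap K lt (C b) (C a) b.
Hypothesis Sq_coh : forall a b, accK (C a) b -> eq_cap K lt (Sq b) (Sq a) b.

Definition offered (a y : K) : Prop := Sq a y \/ C a y.

Definition ladder (a x : K) : Prop :=
  lt x a /\ (accK (C a) x \/ exists g, naccK (C a) g /\ next_above (offered a) g x).

Lemma ladder_offered a x : ladder a x -> offered a x.
Proof. intros [_ [[Cx _]|[g [_ [Ox _]]]]]; [right|]; auto. Qed.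

Lemma ladder_separated a x1 x2 : ladder a x1 -> ladder a x2 -> lt x1 x2 ->
  exists c, C a c /\ leK x1 c /\ lt c x2.
Proof.
  intros L1 [_ [[_ Lim2]|[g [[Cg _] [_ [gx2 Hm]]]]]] x12.
  - destruct (Lim2 x1 x12) as [c [Cc [x1c cx2]]]. exists c. repeat split; auto. left; auto.
  - destruct (classic (leK x1 g)) as [x1g|nx1g]; [eauto|].
    assert (gx1 : lt g x1).
    { destruct (lt_total g x1) as [h|[<-|h]]; auto; exfalso; apply nx1g; [right|left]; auto. }
    exfalso. exact (le_not_lt _ _ (Hm x1 (ladder_offered a x1 L1) gx1) x12).
Qed.

Lemma limit_of_ladder a x : limit_of (ladder a) x -> limit_of (C a) x.
Proof.
  intros Lx d dx. destruct (Lx d dx) as [y1 [L1 [dy1 y1x]]].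
  destruct (Lx y1 y1x) as [y2 [L2 [y12 y2x]]].
  destruct (ladder_separated a y1 y2 L1 L2 y12) as [c [Cc [y1c cy2]]].
  exists c. split; [auto|split; [eapply lt_le_trans|]]; eauto.
Qed.

Lemma acc_ladder a x : accK (ladder a) x <-> accK (C a) x /\ lt x a.
Proof.
  split.
  - intros [[xa Hx] Lx]. pose proof (limit_of_ladder a x Lx) as LCx.
    split; auto. destruct Hx as [Hx|[g [[Cg _] [Ox [gx Hm]]]]]; auto.
    exfalso. destruct (LCx g gx) as [c [Cc [gc cx]]].
    exact (le_not_lt _ _ (Hm c (or_intror Cc) gc) cx).
  - intros [[Cx Lx] xa]. split; [split; auto; left; split; auto|].
    intros d dx. destruct (Lx d dx) as [ga [Cga [dga gax]]].
    destruct (Lx ga gax) as [gb [Cgb [gab gbx]]].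
    destruct (classic (accK (C a) ga)) as [Aga|NAga].
    + exists ga. repeat split; eauto.
    + destruct (next_above_exists (offered a) ga) as [y Hy]; [exists gb; split; [right|]; auto|].
      assert (yx : lt y x) by (apply (le_lt_trans _ gb); [apply (proj2 (proj2 Hy)); [right|]|]; auto).
      exists y. split; [split; [eauto|right; exists ga; split; [split|]; auto]|].
      split; [apply (lt_trans _ ga); [|apply Hy]|]; auto.
Qed.

Lemma ladder_coh a b : accK (ladder a) b -> eq_cap K lt (ladder b) (ladder a) b.
Proof.
  intros Hab. apply acc_ladder in Hab as [HCab ba].
  pose proof (C_coh a b HCab) as E.
  assert (EO : eq_cap K lt (offered b) (offered a) b).
  { intros y. unfold offered. rewrite (E y), (Sq_coh a b HCab y). tauto. }
  assert (EN : forall x, naccK (C b) x <-> naccK (C a) x /\ lt x b).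
  { intros x. unfold nacc. rewrite (E x), (acc_cap _ _ _ E x). tauto. }
  intros x. unfold ladder. split.
  - intros [xb [Hx|[g [Hg Hn]]]].
    + apply (acc_cap _ _ _ E) in Hx as [? ?]. repeat split; eauto.
    + apply EN in Hg as [Hg gb]. apply (next_above_cap _ _ _ _ _ EO) in Hn as [Hn _].
      repeat split; eauto.
  - intros [[xa [Hx|[g [Hg Hn]]]] xb]; split; auto.
    + left. apply (acc_cap _ _ _ E). auto.
    + right. exists g. split; [apply EN; split; eauto; apply (lt_trans _ x); [apply Hn|auto]|].
      apply (next_above_cap _ _ _ _ _ EO). auto.
Qed.

Lemma ladder_club a lam : is_limit K lt a ->
  club_in K lt (C a) a /\ otp_le K lt (C a) lam ->
  club_in K lt (ladder a) a /\ otp_le K lt (ladder a) lam.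
Proof.
  intros Hlim [[Cbd [Ccof Ccl]] Hotp]. split; [split; [|split]|].
  - intros x Lx. apply Lx.
  - intros b ba. destruct (Ccof b ba) as [c [Cc bc]].
    assert (ca : lt c a) by auto.
    destruct (classic (accK (C a) c)) as [Ac|NAc]; [exists c; repeat split; auto|].
    destruct (next_above_exists (offered a) c) as [y Hy].
    { destruct (proj2 Hlim c ca) as [d [cd da]]. destruct (Ccof d da) as [c' [Cc' dc']].
      exists c'. split; [right; auto|eapply lt_le_trans; eauto]. }
    assert (ya : lt y a) by (destruct (proj1 Hy); [apply Sq_below|apply Cbd]; auto).
    exists y. split; [split; [auto|right; exists c; split; [split|]; auto]|].
    left. eapply le_lt_trans; [exact bc|apply Hy].
  - intros b ba [c [Lc cb]] Lb. pose proof (limit_of_ladder a b Lb) as LCb.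
    assert (Cb : C a b).
    { apply Ccl; auto. destruct (LCb c cb) as [c' [? [? ?]]]. eauto. }
    split; auto. left. split; auto.
  - apply (otp_le_transfer _ (C a)); auto.
    + intros x [xa _]. apply Ccof; auto.
    + intros x1 x2 L1 L2 x12. apply ladder_separated; auto.
Qed.

Lemma nacc_ladder a x : naccK (ladder a) x ->
  exists g, naccK (C a) g /\ next_above (offered a) g x.
Proof.
  intros [[xa [Ax|Hx]] NAx]; auto. exfalso. apply NAx, acc_ladder. auto.
Qed.

(* If [C a] lies in [D] and consists of limits of [A], and [Sq a] guesses [A],
   then the accumulation points of [ladder a] lie in [D] and its other points in [A]:
   a successor point taken from [C a] would have a point of [A \cap a] in [Sq a]
   strictly between it and its predecessor. *)
Lemma ladder_guess a D A :
  subset K (C a) (fun x => D x /\ limit_of A x) -> eq_cap K lt (Sq a) A a ->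
  subset K (accK (ladder a)) D /\ subset K (naccK (ladder a)) A.
Proof.
  intros CDA SqA. split.
  - intros x Ax. apply acc_ladder in Ax as [[Cx _] _]. apply CDA, Cx.
  - intros x Nx. destruct (nacc_ladder a x Nx) as [g [_ [[Sqx|Cx] [gx Hm]]]].
    + apply (SqA x), Sqx.
    + exfalso. destruct (proj2 (CDA x Cx) g gx) as [y [Ay [gy yx]]].
      assert (xa : lt x a) by apply (proj1 (proj1 Nx)).
      assert (Oy : offered a y) by (left; apply (SqA y); split; eauto).
      exact (le_not_lt _ _ (Hm y Oy gy) yx).
Qed.

End Ladders.

Lemma diamond_to_club lam S : diamond_square K lt lam S -> club_square K lt lam S.
Proof.
  intros [C [Sq [S' [[Hcl Hcoh] [HSq [HSqcoh [HS' [Hnacc Hguess]]]]]]]].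
  exists (ladder C Sq), S'. split; [split|split; [exact HS'|split]].
  - intros a Hlim. apply ladder_club; auto.
  - apply ladder_coh; auto.
  - intros a x Sx Hx. apply (Hnacc a x Sx), (proj1 (acc_ladder C Sq a x) Hx).
  - intros D A HD HA.
    destruct (classic (exists z, S' z /\ forall y, ~ lt y z)) as [[z [Sz zmin]]|Hmin].
    + (* the least point has an empty ladder, which guesses everything *)
      exists z. split; auto. split; intros x Hx; exfalso; apply (zmin x), (proj1 (proj1 Hx)).
    + assert (guess_clubs : forall D', club K lt D' -> exists a, subset K (C a) D' /\
                sup_eq K lt (accK (C a)) a /\ exists b, lt b a).
      { intros D' HD'. destruct (Hguess D' A HD') as [a [Sa [CD [_ Sup]]]].
        exists a. split; [auto|split; [auto|]]. apply NNPP. intros Hn.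
        apply Hmin. exists a. split; auto. intros y ya. eauto. }
      destruct (Hguess _ A (club_limits_of_cofinal C guess_clubs D A HD HA))
        as [a [Sa [CDA [SqA _]]]].
      exists a. split; auto. apply ladder_guess; auto.
Qed.

End WellOrder.

(* Lemma 2.4 of the paper. *)
Theorem lemma2p4 (K : Type) (lt : K -> K -> Prop) (lam : K) (S : K -> Prop) :
  is_succ_of_uncountable_cardinal K lt lam ->
  stationary K lt S ->
  (diamond_square' K lt lam S -> diamond_square K lt lam S) /\
  (diamond_square K lt lam S -> club_square K lt lam S).
Proof.
  intros [[lt_wf [lt_irrefl [lt_trans lt_total]]] _] _.
  split; [apply diamond'_to_diamond|apply diamond_to_club]; auto.
Qed.
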